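(* Let $A$ be a real $2\times 2$ matrix and $B$ a real $1\times 2$ matrix, and let $\mathrm{NT}=\{\vec{x}\in\mathbb{R}^2 : BA^k\vec{x}>0 \text{ for all integers } k\ge 0\}$. Suppose $\mathrm{NT}\neq\emptyset$, and let $\partial\mathrm{NT}$ denote its topological boundary in $\mathbb{R}^2$. If $\vec{x}\in\partial\mathrm{NT}$ and $B\vec{x}\neq 0$, then $A\vec{x}\in\partial\mathrm{NT}$.
   Context: $\mathrm{NT}$ is the non-termination set of the loop ''while $(B\vec{x}>0)$ $\{\vec{x}:=A\vec{x}\}$'', i.e. the set of inputs on which the loop never terminates. *)

From Stdlib Require Import Reals.
Open Scope R_scope.

Record Mat2 := mkMat2 { m11 : R; m12 : R; m21 : R; m22 : R }.
Record Row2 := mkRow2 { r1 : R; r2 : R }.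
Definition Vec2 := (R * R)%type.

Definition mat2_mul (A C : Mat2) : Mat2 :=
  mkMat2 (m11 A * m11 C + m12 A * m21 C) (m11 A * m12 C + m12 A * m22 C)
         (m21 A * m11 C + m22 A * m21 C) (m21 A * m12 C + m22 A * m22 C).

Definition mat2_id : Mat2 := mkMat2 1 0 0 1.

Fixpoint mat2_pow (A : Mat2) (k : nat) : Mat2 :=
  match k with
  | O => mat2_id
  | S k' => mat2_mul A (mat2_pow A k')
  end.

Definition mat2_app (A : Mat2) (x : Vec2) : Vec2 :=
  (m11 A * fst x + m12 A * snd x, m21 A * fst x + m22 A * snd x).

Definition row2_app (B : Row2) (x : Vec2) : R := r1 B * fst x + r2 B * snd x.

Definition NT (A : Mat2) (B : Row2) (x : Vec2) : Prop :=
  forall k : nat, row2_app B (mat2_app (mat2_pow A k) x) > 0.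

Definition dist2 (x y : Vec2) : R :=
  sqrt ((fst x - fst y) ^ 2 + (snd x - snd y) ^ 2).

Definition in_closure (S : Vec2 -> Prop) (x : Vec2) : Prop :=
  forall eps, eps > 0 -> exists y, S y /\ dist2 x y < eps.

Definition in_interior (S : Vec2 -> Prop) (x : Vec2) : Prop :=
  exists eps, eps > 0 /\ forall y, dist2 x y < eps -> S y.

Definition in_boundary (S : Vec2 -> Prop) (x : Vec2) : Prop :=
  in_closure S x /\ ~ in_interior S x.

(* Two facts drive the proof.
   - Algebra: NT unfolds one iteration of the loop, i.e.
       NT y  <->  B y > 0  /\  NT (A y),
     so A maps NT into NT, and near a point where B is positive the
     set NT is exactly the preimage of NT under A.
   - Topology: x |-> A x and x |-> B x are linear, hence Lipschitz, hence
     continuous.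
   Closure: A x lies in the closure of NT because A(NT) ⊆ NT.  Interior:
   B > 0 on NT forces B x >= 0 on its closure, so B x > 0; on a
   neighbourhood of x we then have NT = A^-1(NT), and an interior point
   A x of NT would make x an interior point of NT. *)

From Stdlib Require Import Reals Lra Psatz.
Open Scope R_scope.

Lemma mat2_app_mul (M N : Mat2) (x : Vec2) :
  mat2_app (mat2_mul M N) x = mat2_app M (mat2_app N x).
Proof. destruct M, N, x; unfold mat2_app, mat2_mul; simpl; f_equal; ring. Qed.

Lemma mat2_app_id (x : Vec2) : mat2_app mat2_id x = x.
Proof. destruct x; unfold mat2_app, mat2_id; simpl; f_equal; ring. Qed.

Lemma mat2_pow_app_comm (A : Mat2) (k : nat) (y : Vec2) :
  mat2_app (mat2_pow A k) (mat2_app A y) = mat2_app A (mat2_app (mat2_pow A k) y).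
Proof.
  induction k as [|k IH]; simpl.
  - now rewrite !mat2_app_id.
  - now rewrite !mat2_app_mul, IH.
Qed.

Lemma NT_unfold (A : Mat2) (B : Row2) (y : Vec2) :
  NT A B y <-> row2_app B y > 0 /\ NT A B (mat2_app A y).
Proof.
  split.
  - intros Hy. split.
    + specialize (Hy 0%nat). simpl in Hy. now rewrite mat2_app_id in Hy.
    + intros k. rewrite mat2_pow_app_comm.
      specialize (Hy (S k)). simpl in Hy. now rewrite mat2_app_mul in Hy.
  - intros [H0 H] [|k]; simpl.
    + now rewrite mat2_app_id.
    + rewrite mat2_app_mul, <- mat2_pow_app_comm. apply H.
Qed.

Lemma dist2_fst (x y : Vec2) : Rabs (fst x - fst y) <= dist2 x y.
Proof.
  unfold dist2. rewrite <- sqrt_Rsqr_abs. apply sqrt_le_1_alt.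
  unfold Rsqr. pose proof (pow2_ge_0 (snd x - snd y)). simpl in *. lra.
Qed.

Lemma dist2_snd (x y : Vec2) : Rabs (snd x - snd y) <= dist2 x y.
Proof.
  unfold dist2. rewrite <- sqrt_Rsqr_abs. apply sqrt_le_1_alt.
  unfold Rsqr. pose proof (pow2_ge_0 (fst x - fst y)). simpl in *. lra.
Qed.

Lemma dist2_nonneg (x y : Vec2) : 0 <= dist2 x y.
Proof. apply sqrt_pos. Qed.

Lemma dist2_le_l1 (x y : Vec2) :
  dist2 x y <= Rabs (fst x - fst y) + Rabs (snd x - snd y).
Proof.
  unfold dist2.
  set (a := fst x - fst y). set (b := snd x - snd y).
  pose proof (Rabs_pos a). pose proof (Rabs_pos b).
  rewrite <- (sqrt_square (Rabs a + Rabs b)) by lra.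
  apply sqrt_le_1_alt.
  assert (a ^ 2 = Rabs a * Rabs a) by (rewrite <- Rabs_mult, Rabs_right; [ring | nra]).
  assert (b ^ 2 = Rabs b * Rabs b) by (rewrite <- Rabs_mult, Rabs_right; [ring | nra]).
  nra.
Qed.

Lemma linear_form_bound (p q a b d : R) :
  Rabs a <= d -> Rabs b <= d -> Rabs (p * a + q * b) <= (Rabs p + Rabs q) * d.
Proof.
  intros Ha Hb. eapply Rle_trans; [apply Rabs_triang |].
  rewrite !Rabs_mult. pose proof (Rabs_pos p). pose proof (Rabs_pos q). nra.
Qed.

Definition mat2_lip (A : Mat2) : R :=
  Rabs (m11 A) + Rabs (m12 A) + Rabs (m21 A) + Rabs (m22 A).

Definition row2_lip (B : Row2) : R := Rabs (r1 B) + Rabs (r2 B).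

Lemma mat2_app_lipschitz (A : Mat2) (x y : Vec2) :
  dist2 (mat2_app A x) (mat2_app A y) <= mat2_lip A * dist2 x y.
Proof.
  eapply Rle_trans; [apply dist2_le_l1 |].
  pose proof (dist2_fst x y) as H1. pose proof (dist2_snd x y) as H2.
  destruct A as [a b c d], x as [x1 x2], y as [y1 y2].
  unfold mat2_app, mat2_lip in *; simpl in *.
  replace (a * x1 + b * x2 - (a * y1 + b * y2)) with (a * (x1 - y1) + b * (x2 - y2)) by ring.
  replace (c * x1 + d * x2 - (c * y1 + d * y2)) with (c * (x1 - y1) + d * (x2 - y2)) by ring.
  pose proof (linear_form_bound a b _ _ _ H1 H2).
  pose proof (linear_form_bound c d _ _ _ H1 H2). lra.
Qed.

Lemma row2_app_lipschitz (B : Row2) (x y : Vec2) :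
  Rabs (row2_app B x - row2_app B y) <= row2_lip B * dist2 x y.
Proof.
  pose proof (dist2_fst x y) as H1. pose proof (dist2_snd x y) as H2.
  destruct B as [a b], x as [x1 x2], y as [y1 y2].
  unfold row2_app, row2_lip in *; simpl in *.
  replace (a * x1 + b * x2 - (a * y1 + b * y2)) with (a * (x1 - y1) + b * (x2 - y2)) by ring.
  now apply linear_form_bound.
Qed.

Lemma lipschitz_delta (K eps : R) :
  0 <= K -> 0 < eps ->
  exists delta, delta > 0 /\ forall r, 0 <= r -> r < delta -> K * r < eps.
Proof.
  intros HK Heps. exists (eps / (K + 1)). split.
  - apply Rdiv_lt_0_compat; lra.
  - intros r Hr Hlt.
    apply (Rmult_lt_compat_r (K + 1)) in Hlt; [| lra].
    replace (eps / (K + 1) * (K + 1)) with eps in Hlt by (field; lra). nra.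
Qed.

Definition continuous2_at (f : Vec2 -> Vec2) (x : Vec2) : Prop :=
  forall eps, eps > 0 ->
  exists delta, delta > 0 /\ forall y, dist2 x y < delta -> dist2 (f x) (f y) < eps.

Definition continuous_at (g : Vec2 -> R) (x : Vec2) : Prop :=
  forall eps, eps > 0 ->
  exists delta, delta > 0 /\ forall y, dist2 x y < delta -> Rabs (g x - g y) < eps.

Lemma mat2_app_continuous (A : Mat2) (x : Vec2) : continuous2_at (mat2_app A) x.
Proof.
  intros eps Heps.
  assert (HK : 0 <= mat2_lip A) by
    (unfold mat2_lip; pose proof (Rabs_pos (m11 A)); pose proof (Rabs_pos (m12 A));
     pose proof (Rabs_pos (m21 A)); pose proof (Rabs_pos (m22 A)); lra).
  destruct (lipschitz_delta _ _ HK Heps) as [delta [Hdelta Hsmall]].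
  exists delta. split; [exact Hdelta |]. intros y Hy.
  pose proof (mat2_app_lipschitz A x y).
  pose proof (Hsmall _ (dist2_nonneg x y) Hy). lra.
Qed.

Lemma row2_app_continuous (B : Row2) (x : Vec2) : continuous_at (row2_app B) x.
Proof.
  intros eps Heps.
  assert (HK : 0 <= row2_lip B) by
    (unfold row2_lip; pose proof (Rabs_pos (r1 B)); pose proof (Rabs_pos (r2 B)); lra).
  destruct (lipschitz_delta _ _ HK Heps) as [delta [Hdelta Hsmall]].
  exists delta. split; [exact Hdelta |]. intros y Hy.
  pose proof (row2_app_lipschitz B x y).
  pose proof (Hsmall _ (dist2_nonneg x y) Hy). lra.
Qed.

Lemma closure_image (f : Vec2 -> Vec2) (S T : Vec2 -> Prop) (x : Vec2) :
  continuous2_at f x -> (forall y, S y -> T (f y)) ->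
  in_closure S x -> in_closure T (f x).
Proof.
  intros Hf HST Hcl eps Heps.
  destruct (Hf eps Heps) as [delta [Hdelta Hnear]].
  destruct (Hcl delta Hdelta) as [y [Hy Hxy]].
  exists (f y). split; [now apply HST | now apply Hnear].
Qed.

Lemma interior_preimage (f : Vec2 -> Vec2) (S T : Vec2 -> Prop) (x : Vec2) (r : R) :
  continuous2_at f x -> r > 0 ->
  (forall y, dist2 x y < r -> T (f y) -> S y) ->
  in_interior T (f x) -> in_interior S x.
Proof.
  intros Hf Hr HTS [eps [Heps Hball]].
  destruct (Hf eps Heps) as [delta [Hdelta Hnear]].
  exists (Rmin r delta). split; [now apply Rmin_pos |].
  intros y Hy.
  pose proof (Rmin_l r delta). pose proof (Rmin_r r delta).
  apply HTS; [lra |]. apply Hball, Hnear. lra.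
Qed.

Lemma positive_near (g : Vec2 -> R) (x : Vec2) :
  continuous_at g x -> g x > 0 ->
  exists r, r > 0 /\ forall y, dist2 x y < r -> g y > 0.
Proof.
  intros Hg Hpos. destruct (Hg (g x) Hpos) as [r [Hr Hnear]].
  exists r. split; [exact Hr |]. intros y Hy.
  pose proof (Hnear y Hy). pose proof (Rle_abs (g x - g y)). lra.
Qed.

Lemma closure_nonneg (g : Vec2 -> R) (S : Vec2 -> Prop) (x : Vec2) :
  continuous_at g x -> (forall y, S y -> g y > 0) ->
  in_closure S x -> 0 <= g x.
Proof.
  intros Hg HS Hcl. apply Rnot_lt_le. intros Hneg.
  destruct (Hg (- g x)) as [delta [Hdelta Hnear]]; [lra |].
  destruct (Hcl delta Hdelta) as [y [Hy Hxy]].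
  pose proof (Hnear y Hxy). pose proof (HS y Hy).
  pose proof (Rle_abs (g y - g x)) as Habs.
  rewrite Rabs_minus_sym in Habs. lra.
Qed.

Theorem lemma1 (A : Mat2) (B : Row2) (x : Vec2) :
  (exists y : Vec2, NT A B y) ->
  in_boundary (NT A B) x ->
  row2_app B x <> 0 ->
  in_boundary (NT A B) (mat2_app A x).
Proof.
  intros _ [Hcl Hint] HBx.
  pose proof (mat2_app_continuous A x) as HA.
  pose proof (row2_app_continuous B x) as HB.
  split.
  - (* A maps NT into itself. *)
    apply (closure_image _ (NT A B)); [exact HA | | exact Hcl].
    intros y Hy. exact (proj2 (proj1 (NT_unfold A B y) Hy)).
  - (* B x > 0, so near x the set NT is the preimage of NT under A. *)
    intros HintA. apply Hint.
    assert (HBpos : row2_app B x > 0).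
    { pose proof (closure_nonneg _ _ x HB (fun y Hy => proj1 (proj1 (NT_unfold A B y) Hy)) Hcl).
      lra. }
    destruct (positive_near _ _ HB HBpos) as [r [Hr Hnear]].
    apply (interior_preimage (mat2_app A) _ (NT A B) x r HA Hr); [| exact HintA].
    intros y Hy HAy. apply NT_unfold. split; [now apply Hnear | exact HAy].
Qed.
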